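(* Let $d$ be a positive integer. For all integers $t\ge1$ and $k\in[0,d-1]$ there exist constants $C=C(t,k,d)$ and $T=T(t,k,d)$ such that every set $A\subseteq\mathbb{R}^d$ satisfying $P(A;T,k,d)$ has a subset $A_{(C)}\subseteq A$ with $|A_{(C)}|\le C$ satisfying $P(A_{(C)};t,k,d)$.
   Context: For $A\subseteq\mathbb{R}^d$, positive integer $t$ and integer $0\le k<d$, $P(A;t,k,d)$ denotes the property that $A$ is not contained in the union of any $t$ translates of a single $k$-dimensional linear subspace of $\mathbb{R}^d$. *)

(* R^d is 'rV[R]_d for R : realType; linear subspaces are
   row spaces of matrices (mxalgebra). *)
From mathcomp Require Import all_boot all_order all_algebra.
From mathcomp Require Import reals.
Set Implicit Arguments. Unset Strict Implicit. Unset Printing Implicit Defensive.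
Import GRing.Theory Num.Theory.
Local Open Scope ring_scope.

Definition in_translate (R : realType) (d k : nat) (V : 'M[R]_(k, d))
  (x y : 'rV[R]_d) : Prop := ((y - x) <= V)%MS.

Definition covered_by_translates (R : realType) (d t k : nat)
  (A : 'rV[R]_d -> Prop) : Prop :=
  exists V : 'M[R]_(k, d), \rank V = k /\
  exists x : 'I_t -> 'rV[R]_d,
    forall a, A a -> exists i : 'I_t, in_translate V (x i) a.

Definition propP (R : realType) (d t k : nat) (A : 'rV[R]_d -> Prop) : Prop :=
  ~ covered_by_translates t k A.

From mathcomp Require Import all_boot all_order all_algebra.
From mathcomp Require Import reals.
From Stdlib Require Import Classical.
Set Implicit Arguments. Unset Strict Implicit. Unset Printing Implicit Defensive.
Import GRing.Theory Num.Theory.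
Local Open Scope ring_scope.

(* One can take T = t.  Grow a finite s inside A in k+1 rounds, keeping the
   invariant that every subspace U lying in a k-dimensional one whose t
   translates cover s has rank at least j.  Each colouring c of s by t colours
   determines the span D_c of the differences of equally coloured points.
   When D_c lies in a k-dimensional subspace, A is not covered by t translates
   of D_c, and a greedy choice gives t+1 points of A that no t translates of
   D_c cover.  Adding these points for all t^|s| colourings raises the
   invariant to j+1: a cover of the enlarged set by translates of U colours s
   with D_c <= U, and rank U <= j would force U = D_c.  After k+1 rounds no
   k-dimensional subspace has t translates covering s. *)

Lemma size_flatten_map_leq (X Y : Type) (F : X -> seq Y) (l : seq X) b :
  (forall x, size (F x) <= b)%N -> (size (flatten (map F l)) <= size l * b)%N.
Proof. by move=> leFb; elim: l => //= x l IH; rewrite size_cat mulSn leq_add. Qed.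

Section TranslateCovers.
Variables (R : realType) (d t : nat).
Implicit Types (a b x : 'rV[R]_d) (A B : 'rV[R]_d -> Prop) (s N : seq 'rV[R]_d).

Definition translates_cover m (U : 'M[R]_(m, d)) A :=
  exists x : 'I_t -> 'rV[R]_d, forall a, A a -> exists i, in_translate U (x i) a.

Lemma translates_coverS m n (U : 'M_(m, d)) (V : 'M_(n, d)) A B :
  (U <= V)%MS -> (forall a, B a -> A a) ->
  translates_cover U A -> translates_cover V B.
Proof.
move=> sUV sBA [x covA]; exists x => a /sBA /covA [i aUx].
by exists i; apply: submx_trans sUV.
Qed.

Lemma in_translate_diff m (U : 'M_(m, d)) x a b :
  in_translate U x a -> in_translate U x b -> (a - b <= U)%MS.
Proof.
move=> aUx bUx; have -> : a - b = (a - x) - (b - x) by rewrite opprB addrA subrK.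
by apply: addmx_sub; rewrite ?eqmx_opp.
Qed.

Definition inequiv_mod m (U : 'M[R]_(m, d)) : rel 'rV[R]_d :=
  fun a b => ~~ (a - b <= U)%MS.

Lemma pairwise_inequiv_size m (U : 'M_(m, d)) N :
  pairwise (inequiv_mod U) N -> translates_cover U (fun a => a \in N) ->
  (size N <= t)%N.
Proof.
move=> /(pairwiseP 0) ineqN [x covN].
have Ncov (i : 'I_(size N)) : exists j, in_translate U (x j) N`_i.
  exact/covN/mem_nth.
have [f Nf] := fin_all_exists Ncov.
suff f_inj : injective f by have := leq_card f f_inj; rewrite !card_ord.
move=> i j fij; apply/eqP; apply: contraT => neq_ij.
wlog lt_ij : i j fij neq_ij / (i < j)%N.
  move=> IH; case: (ltngtP i j) => [lt_ij|lt_ji|eq_ij].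
  - exact: IH fij neq_ij lt_ij.
  - by apply: (IH j i (esym fij)); rewrite // eq_sym.
  - by rewrite (val_inj eq_ij) eqxx in neq_ij.
have /negP[] := ineqN i j (ltn_ord i) (ltn_ord j) lt_ij.
by apply: (in_translate_diff (Nf i)); rewrite fij.
Qed.

Lemma pairwise_inequiv_of_noncover m (U : 'M_(m, d)) A :
  ~ translates_cover U A -> forall n, (n <= t.+1)%N ->
  exists N, [/\ size N = n, forall a, a \in N -> A a
              & pairwise (inequiv_mod U) N].
Proof.
move=> ncovA; elim=> [|n IH] lt_nt; first by exists [::].
have [N [sizeN NA ineqN]] := IH (ltnW lt_nt).
have [a [Aa ineq_a]] : exists a, A a /\ all (inequiv_mod U a) N.
  apply: NNPP => noa; apply: ncovA; exists (fun i : 'I_t => N`_i) => a Aa.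
  have /allPn [b /(nthP 0) [i lt_iN <-] /negPn equiv_ab] :
      ~~ all (inequiv_mod U a) N by apply/negP => ?; apply: noa; exists a.
  have lt_it : (i < t)%N by rewrite (leq_trans lt_iN) // sizeN -ltnS.
  by exists (Ordinal lt_it).
exists (a :: N); split=> /=; first by rewrite sizeN.
  by move=> b; rewrite inE => /predU1P [->|/NA].
by rewrite ineq_a ineqN.
Qed.

Lemma finite_noncover m (U : 'M_(m, d)) A : ~ translates_cover U A ->
  exists N, [/\ size N = t.+1, forall a, a \in N -> A a
              & ~ translates_cover U (fun a => a \in N)].
Proof.
move=> ncovA; have [N [sizeN NA ineqN]] :=
  pairwise_inequiv_of_noncover ncovA (leqnn t.+1).
exists N; split=> // covN.
by have := pairwise_inequiv_size ineqN covN; rewrite sizeN ltnn.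
Qed.

Definition color_diffmx s (c : {ffun 'I_(size s) -> 'I_t}) : 'M[R]_d :=
  (\sum_(p : 'I_(size s) * 'I_(size s) | c p.1 == c p.2)
     <<s`_p.1 - s`_p.2>>)%MS.

Lemma color_diffmx_cover s (c : {ffun 'I_(size s) -> 'I_t}) :
  translates_cover (color_diffmx c) (fun a => a \in s).
Proof.
exists (fun j => if [pick i | c i == j] is Some i then s`_i else 0).
move=> a /(nthP 0) [i lt_is <-]; exists (c (Ordinal lt_is)).
case: pickP => [i' /eqP c_i'|/(_ (Ordinal lt_is))]; last by rewrite eqxx.
by apply: (sumsmx_sup (Ordinal lt_is, i')); rewrite /= ?c_i' ?genmxE.
Qed.

Lemma cover_color_diffmx s m (U : 'M_(m, d)) :
  translates_cover U (fun a => a \in s) ->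
  exists c : {ffun 'I_(size s) -> 'I_t}, (color_diffmx c <= U)%MS.
Proof.
move=> [x covs].
have scov (i : 'I_(size s)) : exists j, in_translate U (x j) s`_i.
  exact/covs/mem_nth.
have [g sg] := fin_all_exists scov.
exists [ffun i => g i]; apply/sumsmx_subP => -[i i'] /=; rewrite !ffunE genmxE.
by move/eqP => g_ii'; apply: (in_translate_diff (sg i)); rewrite g_ii'.
Qed.

Definition in_rank_subspace k m (U : 'M[R]_(m, d)) :=
  exists W : 'M[R]_(k, d), \rank W = k /\ (U <= W)%MS.

Lemma in_rank_subspaceS k m n (U : 'M_(m, d)) (V : 'M_(n, d)) :
  (U <= V)%MS -> in_rank_subspace k V -> in_rank_subspace k U.
Proof.
by move=> sUV [W [rkW sVW]]; exists W; split=> //; apply: submx_trans sVW.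
Qed.

Lemma noncover_witness k A m (M : 'M_(m, d)) : propP t k A ->
  exists N, [/\ forall a, a \in N -> A a, (size N <= t.+1)%N
              & in_rank_subspace k M -> ~ translates_cover M (fun a => a \in N)].
Proof.
move=> propA; case: (classic (in_rank_subspace k M)) => [[W [rkW sMW]]|notM].
  have ncovA : ~ translates_cover M A.
    move=> covA; apply: propA; exists W; split=> //.
    exact: translates_coverS covA.
  have [N [sizeN NA ncovN]] := finite_noncover ncovA.
  by exists N; rewrite sizeN.
by exists [::]; split=> // /notM.
Qed.

Definition cover_rank_ge k j s := forall m (U : 'M[R]_(m, d)),
  in_rank_subspace k U -> translates_cover U (fun a => a \in s) ->
  (j <= \rank U)%N.

Lemma cover_rank_ge_step k j A s n : (0 < t)%N -> propP t k A ->
  (forall a, a \in s -> A a) -> (size s <= n)%N -> cover_rank_ge k j s ->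
  exists s', [/\ forall a, a \in s' -> A a, (size s' <= n + t ^ n * t.+1)%N
               & cover_rank_ge k j.+1 s'].
Proof.
move=> t_gt0 propA sA le_sn rk_s.
have [N NP] := fin_all_exists
  (fun c : {ffun 'I_(size s) -> 'I_t} => noncover_witness (color_diffmx c) propA).
pose s' := s ++ flatten [seq N c | c : {ffun 'I_(size s) -> 'I_t}].
have sub_s a : a \in s -> a \in s' by rewrite mem_cat => ->.
have sub_N c a : a \in N c -> a \in s'.
  move=> aN; rewrite mem_cat; apply/orP; right.
  by apply/flatten_mapP; exists c; rewrite ?mem_enum.
exists s'; split.
- move=> a; rewrite mem_cat => /orP [/sA //|/flatten_mapP [c _]].
  by have [NA _ _] := NP c; apply: NA.
- have le_N c : (size (N c) <= t.+1)%N by have [] := NP c.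
  rewrite size_cat leq_add //; apply: leq_trans (size_flatten_map_leq _ le_N) _.
  rewrite size_map -enumT -cardT card_ffun !card_ord.
  by rewrite leq_mul2r leq_pexp2l ?orbT.
move=> m U inU covU.
have [c sDU] :=
  cover_color_diffmx (translates_coverS (submx_refl U) sub_s covU).
have inD := in_rank_subspaceS sDU inU.
have le_jD := rk_s _ _ inD (color_diffmx_cover c).
rewrite ltnNge; apply/negP => le_Uj.
have sUD : (U <= color_diffmx c)%MS.
  by rewrite -(mxrank_leqif_sup sDU).2 eqn_leq mxrankS //= (leq_trans le_Uj).
have [_ _ ncovN] := NP c.
exact/(ncovN inD)/(translates_coverS sUD (sub_N c) covU).
Qed.

Fixpoint witness_size j :=
  if j is j'.+1 then (witness_size j' + t ^ witness_size j' * t.+1)%N else 0%N.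

Lemma cover_rank_ge_witness k A : (0 < t)%N -> propP t k A -> forall j,
  exists s, [/\ forall a, a \in s -> A a, (size s <= witness_size j)%N
              & cover_rank_ge k j s].
Proof.
move=> t_gt0 propA; elim=> [|j [s [sA le_s rk_s]]]; first by exists [::].
have [s' [s'A le_s' rk_s']] := cover_rank_ge_step t_gt0 propA sA le_s rk_s.
by exists s'.
Qed.

End TranslateCovers.

Theorem lemma4p2 (R : realType) (d : nat) (hd : (0 < d)%N) :
  forall t k : nat, (1 <= t)%N -> (k < d)%N ->
  exists C T : nat, (1 <= T)%N /\
    forall A : 'rV[R]_d -> Prop,
      propP T k A ->
      exists s : seq 'rV[R]_d,
        (forall a, a \in s -> A a) /\ (size s <= C)%N /\
        propP t k (fun a => a \in s).
Proof.
move=> t k t_gt0 _; exists (witness_size t k.+1), t; split=> // A propA.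
have [s [sA le_s rk_s]] := cover_rank_ge_witness t_gt0 propA k.+1.
exists s; split=> //; split=> // -[V [rkV covV]].
have inV : in_rank_subspace k V by exists V; split.
by have := rk_s _ V inV covV; rewrite rkV ltnn.
Qed.
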